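(* For all $x\in\mathbb{C}$ and all integers $m$ and $n$ with $n\ge0$, \[ \sum_{k=0}^n x^k\big(F_mL_{mk}+(xL_m-2)F_{m(k+1)}\big)=x^{n+1}L_mF_{m(n+1)} \] and \[ \sum_{k=0}^n x^k\big(5F_mF_{mk}+(xL_m-2)L_{m(k+1)}\big)=L_m\big(x^{n+1}L_{m(n+1)}-2\big). \]
   Context: $F_n$ and $L_n$ are the Fibonacci and Lucas numbers: $F_0=0$, $F_1=1$, $L_0=2$, $L_1=1$, $W_n=W_{n-1}+W_{n-2}$, extended to negative indices by $F_{-n}=(-1)^{n-1}F_n$ and $L_{-n}=(-1)^nL_n$. *)

From mathcomp Require Import all_boot all_order all_algebra.
From mathcomp Require Import complex.
From mathcomp Require Import Rstruct.
From Stdlib Require Import Reals.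
Set Implicit Arguments. Unset Strict Implicit. Unset Printing Implicit Defensive.
Import Order.TTheory GRing.Theory Num.Theory.
Local Open Scope ring_scope.

Notation Cplx := (complex Rdefinitions.R).

Fixpoint fibn (n : nat) : int :=
  match n with
  | 0%N => 0
  | 1%N as n1 => 1
  | (n'.+1 as n1).+1 => fibn n1 + fibn n'
  end.

Fixpoint lucn (n : nat) : int :=
  match n with
  | 0%N => 2
  | 1%N => 1
  | (n'.+1 as n1).+1 => lucn n1 + lucn n'
  end.

(* Extension to negative indices: F_{-n} = (-1)^(n-1) F_n, L_{-n} = (-1)^n L_n. *)
Definition fib (z : int) : int :=
  match z with
  | Posz n => fibn n
  | Negz n => (-1) ^+ n * fibn n.+1   (* Negz n = -(n+1) *)
  end.

Definition luc (z : int) : int :=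
  match z with
  | Posz n => lucn n
  | Negz n => (-1) ^+ n.+1 * lucn n.+1
  end.

From mathcomp Require Import all_boot all_order all_algebra.
From mathcomp Require Import complex Rstruct.
From mathcomp Require Import zify ring.
Set Implicit Arguments. Unset Strict Implicit. Unset Printing Implicit Defensive.
Import GRing.Theory.
Local Open Scope ring_scope.

(* Sequences on Z obeying the Fibonacci recurrence (Gibonacci sequences) are
   determined by two consecutive values; this yields the addition formulas
   [2 F_(a+b) = F_a L_b + L_a F_b] and [2 L_(a+b) = L_a L_b + 5 F_a F_b].
   With [a = m] and [b = m k] they make the k-th summand equal to
   [x^(k+1) L_m W_(m(k+1)) - x^k L_m W_(mk)] for W = F, L, so both sums
   telescope. *)

Definition gibonacci {V : zmodType} (f : int -> V) :=
  forall z, f (z + 2) = f (z + 1) + f z.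

Lemma gibonacci_eq (V : zmodType) (f g : int -> V) :
  gibonacci f -> gibonacci g -> f 0 = g 0 -> f 1 = g 1 -> f =1 g.
Proof.
move=> gib_f gib_g eq0 eq1.
suff eq_pair z : f z = g z /\ f (z + 1) = g (z + 1) by move=> z; case: (eq_pair z).
elim/int_rec: z => [|n [eq_n eq_n1] |n [eq_n eq_n1]]; first by rewrite add0r.
- have -> : n.+1%:Z = n%:Z + 1 by lia.
  by rewrite -addrA gib_f gib_g eq_n eq_n1.
- have succ : - n.+1%:Z + 1 = - n%:Z by lia.
  have gibN (h : int -> V) :
      gibonacci h -> h (- n.+1%:Z) = h (- n%:Z + 1) - h (- n%:Z).
    move=> gib_h; have := gib_h (- n.+1%:Z).
    have -> : - n.+1%:Z + 2 = - n%:Z + 1 by lia.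
    by rewrite succ => ->; rewrite addrAC subrr add0r.
  by rewrite succ (gibN _ gib_f) (gibN _ gib_g) eq_n eq_n1.
Qed.

Lemma gibonacci_shift (V : zmodType) (f : int -> V) (a : int) :
  gibonacci f -> gibonacci (fun z => f (z + a)).
Proof. by move=> gib_f z /=; rewrite !(addrAC z _ a) gib_f. Qed.

Lemma gibonacciD (V : zmodType) (f g : int -> V) :
  gibonacci f -> gibonacci g -> gibonacci (fun z => f z + g z).
Proof. by move=> gib_f gib_g z; rewrite gib_f gib_g addrACA. Qed.

Lemma gibonacciB (V : zmodType) (f g : int -> V) :
  gibonacci f -> gibonacci g -> gibonacci (fun z => f z - g z).
Proof. by move=> gib_f gib_g z; rewrite gib_f gib_g opprD addrACA. Qed.

Lemma gibonacciZ (R : pzRingType) (f : int -> R) (c : R) :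
  gibonacci f -> gibonacci (fun z => c * f z).
Proof. by move=> gib_f z; rewrite gib_f mulrDr. Qed.

Lemma fib_gibonacci : gibonacci fib.
Proof.
case=> [n|[|[|k]]] //.
- have -> : Posz n + 2 = Posz n.+2 by lia.
  by have -> : Posz n + 1 = Posz n.+1 by lia.
- have -> : Negz k.+2 + 2 = Negz k by rewrite !NegzE; lia.
  have -> : Negz k.+2 + 1 = Negz k.+1 by rewrite !NegzE; lia.
  rewrite /= !exprS; ring.
Qed.

Lemma luc_gibonacci : gibonacci luc.
Proof.
case=> [n|[|[|k]]] //.
- have -> : Posz n + 2 = Posz n.+2 by lia.
  by have -> : Posz n + 1 = Posz n.+1 by lia.
- have -> : Negz k.+2 + 2 = Negz k by rewrite !NegzE; lia.
  have -> : Negz k.+2 + 1 = Negz k.+1 by rewrite !NegzE; lia.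
  rewrite /= !exprS; ring.
Qed.

Lemma luc_fibE z : luc z = 2 * fib (z + 1) - fib z.
Proof.
apply: (gibonacci_eq (g := fun z => 2 * fib (z + 1) - fib z) luc_gibonacci) => //.
exact/gibonacciB/fib_gibonacci/gibonacciZ/gibonacci_shift/fib_gibonacci.
Qed.

Lemma lucS_fib z : 2 * luc (z + 1) = luc z + 5 * fib z.
Proof.
apply: (gibonacci_eq (f := fun z => 2 * luc (z + 1))
                     (g := fun z => luc z + 5 * fib z)) => //.
- exact/gibonacciZ/gibonacci_shift/luc_gibonacci.
- exact/gibonacciD/gibonacciZ/fib_gibonacci/luc_gibonacci.
Qed.

Lemma fibD a b : 2 * fib (a + b) = fib a * luc b + luc a * fib b.
Proof.
rewrite addrC; move: b; apply: (gibonacci_eq (f := fun b => 2 * fib (b + a))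
                                (g := fun b => fib a * luc b + luc a * fib b)).
- exact/gibonacciZ/gibonacci_shift/fib_gibonacci.
- exact/gibonacciD/gibonacciZ/fib_gibonacci/gibonacciZ/luc_gibonacci.
- by rewrite add0r mulr0 addr0 mulrC.
- by rewrite [1 + a]addrC (luc_fibE a) /=; ring.
Qed.

Lemma lucD a b : 2 * luc (a + b) = luc a * luc b + 5 * fib a * fib b.
Proof.
rewrite addrC; move: b; apply: (gibonacci_eq (f := fun b => 2 * luc (b + a))
                                (g := fun b => luc a * luc b + 5 * fib a * fib b)).
- exact/gibonacciZ/gibonacci_shift/luc_gibonacci.
- exact/gibonacciD/gibonacciZ/fib_gibonacci/gibonacciZ/luc_gibonacci.
- by rewrite add0r mulr0 addr0 mulrC.
- by rewrite [1 + a]addrC lucS_fib /=; ring.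
Qed.

Lemma telescope_weighted_sum (R : comPzRingType) (x c : R) (a b : nat -> R) n :
    (forall k, a k + c * b k = 2 * b k.+1) ->
  \sum_(0 <= k < n) x ^+ k * (a k + (x * c - 2) * b k.+1)
    = x ^+ n * c * b n - c * b 0%N.
Proof.
move=> ab_rec; have -> : c * b 0%N = x ^+ 0 * c * b 0%N by rewrite expr0 mul1r.
apply: (@telescope_sumr_eq _ _ _ (fun k => x ^+ k * c * b k)) => // k _.
have -> : a k = 2 * b k.+1 - c * b k by rewrite -ab_rec addrK.
by rewrite exprS; ring.
Qed.

Theorem proposition2 (x : Cplx) (m : int) (n : nat) :
  \sum_(0 <= k < n.+1)
      x ^+ k * ((fib m * luc (m * k%:Z))%:~R
                + (x * (luc m)%:~R - 2) * (fib (m * (k%:Z + 1)))%:~R)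
    = x ^+ n.+1 * (luc m * fib (m * (n%:Z + 1)))%:~R
  /\
  \sum_(0 <= k < n.+1)
      x ^+ k * ((5 * fib m * fib (m * k%:Z))%:~R
                + (x * (luc m)%:~R - 2) * (luc (m * (k%:Z + 1)))%:~R)
    = (luc m)%:~R * (x ^+ n.+1 * (luc (m * (n%:Z + 1)))%:~R - 2).
Proof.
have succ k : k%:Z + 1 = k.+1 by rewrite -PoszD addn1.
have mulzS k : m * k.+1%:Z = m + m * k%:Z by rewrite -succ mulrDr mulr1 addrC.
split; under eq_bigr do rewrite succ; rewrite succ.
- rewrite (@telescope_weighted_sum _ x _ _ (fun k => (fib (m * k%:Z))%:~R)).
    by rewrite mulr0 /= mulr0 subr0 intrM mulrA.
  by move=> k; rewrite -intrM -intrD mulzS -fibD intrM; congr (_ * _).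
- rewrite (@telescope_weighted_sum _ x _ _ (fun k => (luc (m * k%:Z))%:~R)).
    by rewrite mulr0 /=; ring.
  by move=> k; rewrite -intrM -intrD addrC mulzS -lucD intrM; congr (_ * _).
Qed.
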